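(* Let $R$ be a local ring and $s\in R$ a central element with $s\in J(R)$. For $A\in M_2(R;s)$, we have $A^n\in J\big(M_2(R;s)\big)$ for some positive integer $n$ if and only if $A\in J\big(M_2(R;s)\big)$.
   Context: All rings are associative with identity. A ring $R$ is local if $R/J(R)$ is a division ring, where $J(R)$ is the Jacobson radical. For a ring $R$ and a central element $s\in R$, $M_2(R;s)$ denotes the ring whose elements are the $2\times 2$ arrays $\left[\begin{smallmatrix} a&b\\ c&d\end{smallmatrix}\right]$ with $a,b,c,d\in R$, with componentwise addition and multiplication $\left[\begin{smallmatrix} a&b\\ c&d\end{smallmatrix}\right]\left[\begin{smallmatrix} a'&b'\\ c'&d'\end{smallmatrix}\right]=\left[\begin{smallmatrix} aa'+s^2bc'&ab'+bd'\\ ca'+dc'&s^2cb'+dd'\end{smallmatrix}\right]$. $J\big(M_2(R;s)\big)$ denotes the Jacobson radical of this ring. *)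

From HB Require Import structures.
From mathcomp Require Import all_boot all_order all_algebra.
Set Implicit Arguments. Unset Strict Implicit. Unset Printing Implicit Defensive.
Import GRing.Theory.
Local Open Scope ring_scope.

Definition left_ideal (R : pzRingType) (I : R -> Prop) : Prop :=
  I 0 /\ (forall x y, I x -> I y -> I (x - y)) /\ (forall r x, I x -> I (r * x)).

Definition maximal_left_ideal (R : pzRingType) (I : R -> Prop) : Prop :=
  [/\ left_ideal I, ~ I 1 &
      forall K : R -> Prop, left_ideal K -> ~ K 1 ->
        (forall x, I x -> K x) -> forall x, K x -> I x].

Definition jacobson (R : pzRingType) (x : R) : Prop :=
  forall I : R -> Prop, maximal_left_ideal I -> I x.

(* R is local iff R/J(R) is a division ring, written out: the class of 1 is
   nonzero, and every nonzero class has a two-sided inverse modulo J(R). *)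
Definition local_ring (R : pzRingType) : Prop :=
  ~ jacobson (1 : R) /\
  forall x : R, ~ jacobson x ->
    exists y : R, jacobson (x * y - 1) /\ jacobson (y * x - 1).

Definition central (R : pzRingType) (s : R) : Prop := forall x : R, s * x = x * s.

Section M2.
Variables (R : pzRingType) (s : R) (hs : central s).

(* An element ((a, b), (c, d)) stands for the array [a b; c d]. *)
(* The type depends on the centrality proof so that the ring structure
   below can be attached to it canonically. *)
Definition M2_of (_ : central s) : Type := ((R * R) * (R * R))%type.
Local Notation M2 := (M2_of hs).
HB.instance Definition _ := GRing.Zmodule.on M2.

Definition M2mk (a b c d : R) : M2 := ((a, b), (c, d)).

Definition M2one : M2 := M2mk 1 0 0 1.

Definition M2mul (A B : M2) : M2 :=
  let: ((a, b), (c, d)) := A in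
  let: ((a', b'), (c', d')) := B in
  M2mk (a * a' + s ^+ 2 * b * c') (a * b' + b * d')
       (c * a' + d * c') (s ^+ 2 * c * b' + d * d').

Let t := s ^+ 2.
Let ht (x : R) : t * x = x * t.
Proof. by rewrite /t expr2 -mulrA hs !mulrA hs. Qed.

Lemma M2mulA : associative M2mul.
Proof.
move=> [[a b] [c d]] [[a' b'] [c' d']] [[a'' b''] [c'' d'']].
rewrite /M2mul /M2mk -/t.
congr (_, _); congr (_, _);
  rewrite !(mulrDl, mulrDr, mulrA) -/t; rewrite /t expr2 ?mulrA; do 3 rewrite -?(hs a) -?(hs b) -?(hs c) -?(hs d) -?(hs (s * a)) -?(hs (s * b)) -?(hs (s * c)) -?(hs (s * d)) ?mulrA.
all: by rewrite addrACA.
Qed.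

Lemma M2mul1r : left_id M2one M2mul.
Proof.
move=> [[a b] [c d]]; rewrite /M2mul /M2one /M2mk.
by rewrite !(mul1r, mul0r, mulr0, addr0, add0r).
Qed.

Lemma M2mulr1 : right_id M2one M2mul.
Proof.
move=> [[a b] [c d]]; rewrite /M2mul /M2one /M2mk.
by rewrite !(mulr1, mul0r, mulr0, addr0, add0r).
Qed.

Lemma M2mulDl : left_distributive M2mul +%R.
Proof.
move=> [[a b] [c d]] [[a' b'] [c' d']] [[a'' b''] [c'' d'']].
rewrite /M2mul /M2mk /=.
by congr (_, _); congr (_, _); rewrite !(mulrDl, mulrDr) addrACA.
Qed.

Lemma M2mulDr : right_distributive M2mul +%R.
Proof.
move=> [[a b] [c d]] [[a' b'] [c' d']] [[a'' b''] [c'' d'']].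
rewrite /M2mul /M2mk /=.
by congr (_, _); congr (_, _); rewrite !(mulrDl, mulrDr) addrACA.
Qed.

HB.instance Definition _ := GRing.Zmodule_isPzRing.Build M2
  M2mulA M2mul1r M2mulr1 M2mulDl M2mulDr.

Lemma M2mulE (A B : M2) : A * B = M2mul A B.
Proof. by []. Qed.

End M2.

From HB Require Import structures.
From mathcomp Require Import all_boot all_order all_algebra.
From mathcomp Require Import boolp classical_sets.

(* Modulo J(R) the diagonal entries of M_2(R; s) behave like two copies of R,
   because s lies in J(R): the matrices with a in J(R), resp. d in J(R), form
   maximal left ideals, and a matrix with left invertible diagonal entries is
   left invertible.  Hence J(M_2(R; s)) is exactly the set of matrices whose
   diagonal entries lie in J(R).  The diagonal entries of A^n are a^n and d^n
   modulo J(R), and in a local ring a^n in J(R) forces a in J(R), since every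
   element outside J(R) is left invertible. *)
Set Implicit Arguments.
Unset Strict Implicit.
Unset Printing Implicit Defensive.
Import GRing.Theory.
Local Open Scope ring_scope.
Local Open Scope classical_set_scope.

Section LeftIdeals.
Variables (R : pzRingType) (I : R -> Prop).
Hypothesis hI : left_ideal I.

Lemma left_ideal0 : I 0.
Proof. by case: hI. Qed.

Lemma left_idealB x y : I x -> I y -> I (x - y).
Proof. by case: hI => _ [hB _]; apply: hB. Qed.

Lemma left_idealM r x : I x -> I (r * x).
Proof. by case: hI => _ [_ hM]; apply: hM. Qed.

Lemma left_idealN x : I x -> I (- x).
Proof. by move=> Ix; rewrite -sub0r; apply: left_idealB => //; apply: left_ideal0. Qed.

Lemma left_idealD x y : I x -> I y -> I (x + y).
Proof. by move=> Ix Iy; rewrite -[y]opprK; apply: left_idealB => //; apply: left_idealN. Qed.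

End LeftIdeals.

Section Krull.
Variable R : pzRingType.

Lemma maximal_left_ideal_exists (I : R -> Prop) :
  left_ideal I -> ~ I 1 -> exists2 M, maximal_left_ideal M & I `<=` M.
Proof.
move=> idI I1.
pose T := {X : set R | [/\ left_ideal X, ~ X 1 & I `<=` X]}.
pose I0 : T := exist _ I (And3 idI I1 (@subset_refl _ I)).
pose le (X Y : T) := `[< sval X `<=` sval Y >].
have [|X Y Z /asboolP XY /asboolP YZ|C Ctot|[M [idM M1 IM]] Mmax] := ZL_preorder I0 (R := le).
- by move=> X; apply/asboolP.
- by apply/asboolP/(subset_trans XY).
- have [[X0 CX0]|C0] := pselect (exists X, C X); last first.
    by exists I0 => X CX; case: C0; exists X.
  have idT (X : T) : left_ideal (sval X) by case: X => X [].
  pose U := \bigcup_(X in C) sval X.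
  have idU : left_ideal U.
    split; [|split].
    - by exists X0 => //; exact: left_ideal0 (idT X0).
    - move=> x y [X CX Xx] [Y CY Yy].
      have [/asboolP XY|/asboolP YX] := Ctot X Y CX CY.
      + by exists Y => //; exact: (left_idealB (idT Y) (XY x Xx) Yy).
      + by exists X => //; exact: (left_idealB (idT X) Xx (YX y Yy)).
    - by move=> r x [X CX Xx]; exists X => //; exact: (left_idealM (idT X) r Xx).
  have U1 : ~ U 1 by case=> X _; have [_ X1 _] := proj2_sig X.
  have IU : I `<=` U.
    by move=> x Ix; exists X0 => //; have [_ _ IX0] := proj2_sig X0; apply: IX0.
  by exists (exist _ U (And3 idU U1 IU)) => X CX; apply/asboolP => x Xx; exists X.
exists M => //; split => // K idK K1 MK.
by have /asboolP := Mmax (exist _ K (And3 idK K1 (subset_trans IM MK))) (asboolT MK).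
Qed.

Lemma maximal_left_idealP (I : R -> Prop) :
  maximal_left_ideal I <->
  [/\ left_ideal I, ~ I 1 & forall x, ~ I x -> exists y, I (1 - y * x)].
Proof.
split=> [[idI I1 Imax]|[idI I1 Iinv]]; split=> //.
  move=> x Ix; pose K z := exists m y, I m /\ z = m + y * x.
  have idK : left_ideal K.
    split; first by exists 0, 0; rewrite mul0r addr0; split=> //; apply: left_ideal0.
    split=> [_ _ [m [y [Im ->]]] [m' [y' [Im' ->]]]|r _ [m [y [Im ->]]]].
      exists (m - m'), (y - y'); split; first exact: left_idealB.
      by rewrite mulrBl opprD addrACA.
    by exists (r * m), (r * y); rewrite mulrDr mulrA; split=> //; apply: left_idealM.
  have /contrapT [m [y [Im e]]] : ~ ~ K 1.
    move=> K1; apply/Ix/(Imax K idK K1) => [z Iz|]; first by exists z, 0; rewrite mul0r addr0.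
    by exists 0, 1; rewrite add0r mul1r; split=> //; apply: left_ideal0.
  by exists y; rewrite e addrK.
move=> K idK K1 IK x Kx; apply: contrapT => Ix.
have [y Iyx] := Iinv x Ix; apply: K1.
by rewrite -(subrK (y * x) 1); apply: left_idealD => //; [apply: IK | apply: left_idealM].
Qed.

End Krull.

Section Jacobson.
Variable R : pzRingType.
Implicit Types x a j : R.

Lemma left_ideal_jacobson : left_ideal (@jacobson R).
Proof.
split; [|split].
- by move=> I [idI _ _]; exact: left_ideal0.
- by move=> x y Jx Jy I mI; have [idI _ _] := mI; exact: (left_idealB idI (Jx I mI) (Jy I mI)).
- by move=> r x Jx I mI; have [idI _ _] := mI; exact: (left_idealM idI r (Jx I mI)).
Qed.

Lemma jacobson_linv j : jacobson j -> exists u, u * (1 - j) = 1.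
Proof.
move=> Jj; apply: contrapT => noinv.
pose L x := exists r, x = r * (1 - j).
have idL : left_ideal L.
  split; first by exists 0; rewrite mul0r.
  split=> [_ _ [r ->] [r' ->]|r _ [r' ->]]; first by exists (r - r'); rewrite mulrBl.
  by exists (r * r'); rewrite mulrA.
have L1 : ~ L 1 by case=> r e; apply: noinv; exists r.
have [M mM LM] := maximal_left_ideal_exists idL L1.
have [idM M1 _] := mM; apply: M1.
rewrite -(subrK j 1); apply: left_idealD => //; last exact: Jj.
by apply: LM; exists 1; rewrite mul1r.
Qed.

Hypothesis hloc : local_ring R.

Lemma local_linv x : ~ jacobson x -> exists q, q * x = 1.
Proof.
case: hloc => _ hl /hl [y [_ Jyx]].
have [u hu] := jacobson_linv (left_idealN left_ideal_jacobson Jyx).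
by exists (u * y); rewrite -mulrA -[RHS]hu opprK addrC subrK.
Qed.

Lemma local_jacobson_expr a n : (0 < n)%N -> jacobson (a ^+ n) -> jacobson a.
Proof.
move=> n_gt0 Jan; apply: contrapT => /local_linv [q qa].
have qaX k : q ^+ k * a ^+ k = 1.
  elim: k => [|k IHk]; first by rewrite !expr0 mul1r.
  by rewrite exprSr exprS -mulrA (mulrA q) qa mul1r.
case: hloc => J1 _; apply: J1; rewrite -(qaX n).
exact: (left_idealM left_ideal_jacobson _ Jan).
Qed.

End Jacobson.

Section M2.
Variables (R : pzRingType) (s : R) (hs : central s).
Hypothesis hsJ : jacobson s.
Local Notation M2 := (M2_of hs).
(* Literals are written through M2mk: a bare pair literal would be multiplied
   in the componentwise product ring instead. *)
Local Notation mx := (M2mk hs).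
Let idJ := left_ideal_jacobson R.

Lemma jacobson_s2M (x y : R) : jacobson (s ^+ 2 * x * y).
Proof. by rewrite expr2 -!mulrA hs; exact: (left_idealM idJ _ hsJ). Qed.

Lemma M2mkM (a b c d a' b' c' d' : R) :
  mx a b c d * mx a' b' c' d' =
  mx (a * a' + s ^+ 2 * b * c') (a * b' + b * d')
     (c * a' + d * c') (s ^+ 2 * c * b' + d * d').
Proof. by []. Qed.

Lemma M2mkB (a b c d a' b' c' d' : R) :
  mx a b c d - mx a' b' c' d' = mx (a - a') (b - b') (c - c') (d - d').
Proof. by []. Qed.

Lemma M2mkD (a b c d a' b' c' d' : R) :
  mx a b c d + mx a' b' c' d' = mx (a + a') (b + b') (c + c') (d + d').
Proof. by []. Qed.

Lemma M2mk1 : 1 = mx 1 0 0 1.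
Proof. by []. Qed.

Lemma M2_mul11 (X Y : M2) : (X * Y).1.1 = X.1.1 * Y.1.1 + s ^+ 2 * X.1.2 * Y.2.1.
Proof. by case: X Y => [[? ?] [? ?]] [[? ?] [? ?]]. Qed.

Lemma M2_mul22 (X Y : M2) : (X * Y).2.2 = s ^+ 2 * X.2.1 * Y.1.2 + X.2.2 * Y.2.2.
Proof. by case: X Y => [[? ?] [? ?]] [[? ?] [? ?]]. Qed.

Lemma M2_diag_linv (A : M2) u v :
  u * A.1.1 = 1 -> v * A.2.2 = 1 -> exists Z : M2, Z * A = 1.
Proof.
case: A => [[a b] [c d]] /= ua vd; change (exists Z : M2, Z * mx a b c d = 1).
(* Gaussian elimination by rows: after scaling the rows by u and v, clearing
   the (2,1) entry leaves 1 - s^2 v c u b in the corner, which is left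
   invertible because s lies in J(R). *)
have [w hw] := jacobson_linv (jacobson_s2M (v * c) (u * b)).
have e11m : mx u 0 0 0 * mx a b c d = mx 1 (u * b) 0 0.
  by rewrite M2mkM ua !(mul0r, mulr0, addr0).
have e22m : mx 0 0 0 v * mx a b c d = mx 0 0 (v * c) 1.
  by rewrite M2mkM vd !(mul0r, mulr0, add0r).
pose Z2 := mx 0 0 0 w * (mx 0 0 0 v - mx 0 0 (v * c) 0 * mx u 0 0 0).
have Z2m : Z2 * mx a b c d = mx 0 0 0 1.
  rewrite /Z2 -mulrA mulrBl -mulrA e11m e22m [mx 0 0 _ 0 * _]M2mkM M2mkB M2mkM.
  by rewrite !(mul0r, mulr0, mulr1, addr0, add0r, subrr, subr0, oppr0) hw.
pose Z1 := mx u 0 0 0 - mx 0 (u * b) 0 0 * Z2.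
have Z1m : Z1 * mx a b c d = mx 1 0 0 0.
  rewrite /Z1 mulrBl -mulrA Z2m e11m M2mkM M2mkB.
  by rewrite !(mul0r, mulr0, mulr1, addr0, add0r, subrr, subr0, oppr0).
by exists (Z1 + Z2); rewrite mulrDl Z1m Z2m M2mkD M2mk1 !(addr0, add0r).
Qed.

Hypothesis hloc : local_ring R.

Lemma maximal_left_ideal_M2_11 : maximal_left_ideal (fun A : M2 => jacobson A.1.1).
Proof.
apply/maximal_left_idealP; split.
- split; first exact: left_ideal0 idJ.
  split=> [A B|X A JA]; first exact: left_idealB.
  by rewrite M2_mul11; exact: (left_idealD idJ (left_idealM idJ _ JA) (jacobson_s2M _ _)).
- by case: hloc.
move=> A /(local_linv hloc) [q qA]; exists (mx q 0 0 0).
rewrite /= M2_mul11 /= qA !(mulr0, mul0r, addr0, subrr); exact: left_ideal0 idJ.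
Qed.

Lemma maximal_left_ideal_M2_22 : maximal_left_ideal (fun A : M2 => jacobson A.2.2).
Proof.
apply/maximal_left_idealP; split.
- split; first exact: left_ideal0 idJ.
  split=> [A B|X A JA]; first exact: left_idealB.
  by rewrite M2_mul22; exact: (left_idealD idJ (jacobson_s2M _ _) (left_idealM idJ _ JA)).
- by case: hloc.
move=> A /(local_linv hloc) [q qA]; exists (mx 0 0 0 q).
rewrite /= M2_mul22 /= qA !(mulr0, mul0r, add0r, subrr); exact: left_ideal0 idJ.
Qed.

Lemma jacobson_M2P (A : M2) : jacobson A <-> jacobson A.1.1 /\ jacobson A.2.2.
Proof.
split=> [JA|[Ja Jd] M mM].
  by split; [exact: JA _ maximal_left_ideal_M2_11 | exact: JA _ maximal_left_ideal_M2_22].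
apply: contrapT => MA.
have [idM M1 Minv] := (maximal_left_idealP M).1 mM.
have [Y MYA] := Minv A MA.
have J11 := left_idealD idJ (left_idealM idJ Y.1.1 Ja) (jacobson_s2M Y.1.2 A.2.1).
have J22 := left_idealD idJ (jacobson_s2M Y.2.1 A.1.2) (left_idealM idJ Y.2.2 Jd).
have [u] := jacobson_linv J11; rewrite -M2_mul11 => hu.
have [v] := jacobson_linv J22; rewrite -M2_mul22 => hv.
have [Z Z1] := M2_diag_linv (A := 1 - Y * A) hu hv.
by apply: M1; rewrite -Z1; exact: (left_idealM idM Z MYA).
Qed.

Lemma M2_expr_diag (A : M2) n :
  jacobson (A.1.1 ^+ n - (A ^+ n).1.1) /\ jacobson (A.2.2 ^+ n - (A ^+ n).2.2).
Proof.
elim: n => [|n [IH1 IH2]]; first by rewrite !expr0 /= !subrr; split; exact: left_ideal0 idJ.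
rewrite !exprS M2_mul11 M2_mul22; split.
- rewrite opprD addrA -mulrBr.
  exact: (left_idealB idJ (left_idealM idJ _ IH1) (jacobson_s2M _ _)).
- rewrite opprD addrCA -mulrBr.
  exact: (left_idealD idJ (left_idealN idJ (jacobson_s2M _ _)) (left_idealM idJ _ IH2)).
Qed.

End M2.

Theorem lemma2p6 (R : pzRingType) (s : R) (hs : central s)
    (hloc : local_ring R) (hsJ : jacobson s) (A : M2_of hs) :
  (exists n : nat, (0 < n)%N /\ jacobson (A ^+ n)) <-> jacobson A.
Proof.
split=> [[n [n_gt0 JAn]]|JA]; last by exists 1%N; rewrite expr1.
have idJ := left_ideal_jacobson R.
have [JAn11 JAn22] := (jacobson_M2P hsJ hloc (A ^+ n)).1 JAn.
have [D11 D22] := M2_expr_diag hsJ A n.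
apply/(jacobson_M2P hsJ hloc); split; apply: (local_jacobson_expr hloc n_gt0).
- by rewrite -(subrK (A ^+ n).1.1 (A.1.1 ^+ n)); exact: (left_idealD idJ D11 JAn11).
- by rewrite -(subrK (A ^+ n).2.2 (A.2.2 ^+ n)); exact: (left_idealD idJ D22 JAn22).
Qed.
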